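(* Let the Algorithm be as in the context, run with $G_k:=\mathrm{grad} f(x_k)$ for all $k$, and assume (A1), (A2), (A3)-b, (A4), that $\sigma_0\le2\gamma L_H$, and that $f$ attains its minimum over $\mathcal M$. Suppose that for every iteration $k$ the constant $\delta_H$ satisfies \[ \delta_H\le\min\Big\{\min\{\tfrac1{12},\tfrac{1-\rho_{TH}}{6}\}\big(\sqrt{K_H^2+4\sigma_k\varepsilon_g}-K_H\big),\ \min\{\tfrac16,\tfrac{1-\rho_{TH}}{3}\}\nu\varepsilon_H\Big\}. \] Then the Algorithm terminates after at most $\mathcal O(\max\{\varepsilon_g^{-2},\varepsilon_H^{-3}\})$ iterations.
   Context: Let $\mathcal M$ be a connected complete Riemannian manifold; $\langle\cdot,\cdot\rangle$ and $\|\cdot\|$ denote the inner product and norm on tangent spaces $T_x\mathcal M$. Let $f=\frac1n\sum_{i=1}^n f_i$ with each $f_i:\mathcal M\to\mathbb R$ twice continuously differentiable; $\mathrm{grad} f$ is the Riemannian gradient. A retraction is a smooth map $R:T\mathcal M\to\mathcal M$ whose restriction $R_x$ to $T_x\mathcal M$ satisfies $R_x(0_x)=x$, $DR_x(0_x)=\mathrm{Id}$. $\nabla^2 f\circ R_x(0_x)$ is the Hessian at $0_x$ of $f\circ R_x$ on the inner-product space $T_x\mathcal M$. $\lambda_{\min}(H)$ denotes the smallest eigenvalue of a self-adjoint operator $H$. Algorithm: fix $\varepsilon_g,\varepsilon_H,\rho_{TH}\in(0,1)$, $\gamma>1$, $x_0\in\mathcal M$, $\sigma_0>0$. At iteration $k$: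 with $G_k\in T_{x_k}\mathcal M$ and a constructed self-adjoint $H_k$ on $T_{x_k}\mathcal M$, if $\|G_k\|\le\varepsilon_g$ and $\lambda_{\min}(H_k)\ge-\varepsilon_H$, stop; otherwise choose $\eta_k\in T_{x_k}\mathcal M$ approximately minimizing $m_k(\eta):=\langle G_k,\eta\rangle+\frac12\langle H_k[\eta],\eta\rangle+\frac13\sigma_k\|\eta\|^3$, set $\rho_k=\frac{f(x_k)-f\circ R_{x_k}(\eta_k)}{-m_k(\eta_k)}$; if $\rho_k\ge\rho_{TH}$ set $x_{k+1}=R_{x_k}(\eta_k)$, $\sigma_{k+1}=\sigma_k/\gamma$, else $x_{k+1}=x_k$, $\sigma_{k+1}=\gamma\sigma_k$. Cauchy point and eigenpoint: $\eta_k^C:=-\alpha^C G_k$ with $\alpha^C\in\arg\min_{\alpha\ge0}m_k(-\alpha G_k)$. Fix $\nu\in(0,1)$. When $\lambda_{\min}(H_k)<0$, $\eta_k^E:=\alpha^E u_k$ where $u_k$ satisfies $\langle u_k,H_k[u_k]\rangle\le\nu\lambda_{\min}(H_k)\|u_k\|^2<0$ and $\langle G_k,u_k\rangle\le0$, and $\alpha^E\in\arg\min_{\alpha\ge0}m_k(\alpha u_k)$. Assumptions: (A1) there is $L_H>0$ with $\big|f\circ R_{x_k}(\eta_k)-f(x_k)-\langle\mathrm{grad} f(x_k),\eta_k\rangle-\frac12\langle\nabla^2 f\circ R_{x_k}(0_{x_k})[\eta_k],\eta_k\rangle\big|\le\frac12L_H\|\eta_k\|^3$ for all $k$. (A2)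 there is $K_H>0$ with $\|H_k\|:=\sup_{\|\eta\|\le1}\langle\eta,H_k[\eta]\rangle\le K_H$ for all $k$. (A3)-b there is $\delta_H\in(0,1)$ with $\|(H_k-\nabla^2 f\circ R_{x_k}(0_{x_k}))[\eta_k]\|\le\delta_H\|\eta_k\|$ for all $k$. (A4) for all $k$, $-m_k(\eta_k)\ge-m_k(\eta_k^C)$, and $-m_k(\eta_k)\ge-m_k(\eta_k^E)$ whenever $\lambda_{\min}(H_k)<0$. The constant in $\mathcal O(\cdot)$ is independent of $\varepsilon_g,\varepsilon_H$. *)

From HB Require Import structures.
From mathcomp Require Import all_boot all_order all_algebra.
From mathcomp Require Import all_classical all_reals all_analysis.
Set Implicit Arguments. Unset Strict Implicit. Unset Printing Implicit Defensive.
Import Order.TTheory GRing.Theory Num.Theory.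
Import numFieldNormedType.Exports.
Local Open Scope ring_scope.
Local Open Scope classical_set_scope.

Section RiemDefs.
Variable R : realType.
Variable d : nat.

(* A tangent space T_x M (dimension d) is identified, through an orthonormal
   frame, with the Euclidean space 'rV[R]_d; operators are d x d matrices
   acting on row vectors:  H[u] := u *m H. *)
Definition ip (u v : 'rV[R]_d) : R := (u *m v^T) 0 0.
Definition enorm (u : 'rV[R]_d) : R := Num.sqrt (ip u u).
Definition app (H : 'M[R]_d) (u : 'rV[R]_d) : 'rV[R]_d := u *m H.

Definition basis (i : 'I_d) : 'rV[R]_d := delta_mx 0 i.
Definition pderiv (i : 'I_d) (g : 'rV[R]_d -> R) : 'rV[R]_d -> R :=
  fun y => derive g y (basis i).

Definition C2 (g : 'rV[R]_d -> R) : Prop :=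
  forall i j : 'I_d,
    (forall y, derivable g y (basis j)) /\
    (forall y, derivable (pderiv j g) y (basis i)) /\
    continuous (pderiv i (pderiv j g)).

Definition egrad (g : 'rV[R]_d -> R) : 'rV[R]_d := \row_i pderiv i g 0.
Definition ehess (g : 'rV[R]_d -> R) : 'M[R]_d :=
  \matrix_(i, j) pderiv i (pderiv j g) 0.

Definition lambda_min (H : 'M[R]_d) : R := inf [set a : R | eigenvalue H a].
Definition opnorm (H : 'M[R]_d) : R :=
  sup [set ip e (app H e) | e in [set e | enorm e <= 1]].

Definition model (G : 'rV[R]_d) (H : 'M[R]_d) (sigma : R) (eta : 'rV[R]_d) : R :=
  ip G eta + 2^-1 * ip (app H eta) eta + 3^-1 * sigma * enorm eta ^+ 3.

Variable M : Type.
(* retraction, written in orthonormal coordinates of the tangent spaces *)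
Variable Rt : M -> 'rV[R]_d -> M.

(* Riemannian gradient = gradient at 0_x of f o R_x  (since DR_x(0_x) = Id) *)
Definition rgrad (f : M -> R) (x : M) : 'rV[R]_d := egrad (f \o Rt x).
Definition rhess (f : M -> R) (x : M) : 'M[R]_d := ehess (f \o Rt x).

Definition favg (n : nat) (fi : 'I_n -> M -> R) : M -> R :=
  fun y => (n%:R)^-1 * \sum_(i < n) fi i y.

Definition stop_test (epsg epsH : R) (G : 'rV[R]_d) (H : 'M[R]_d) : Prop :=
  enorm G <= epsg /\ - epsH <= lambda_min H.

(* Everything the Algorithm and the assumptions (A1),(A2),(A3)-b,(A4) and the
   bound on delta_H require at a (non-terminating) iteration k, with
   G_k := grad f(x_k). *)
Definition step_ok (f : M -> R) (rhoTH gamma nu epsg epsH LH KH deltaH : R)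
  (x : nat -> M) (sigma : nat -> R) (H : nat -> 'M[R]_d)
  (eta : nat -> 'rV[R]_d) (k : nat) : Prop :=
  let G := rgrad f (x k) in
  let Hf := rhess f (x k) in
  let m := model G (H k) (sigma k) in
  let rho := (f (x k) - f (Rt (x k) (eta k))) / (- m (eta k)) in
  (H k)^T = H k /\
  (rhoTH <= rho -> x k.+1 = Rt (x k) (eta k) /\ sigma k.+1 = sigma k / gamma) /\
  (rho < rhoTH -> x k.+1 = x k /\ sigma k.+1 = gamma * sigma k) /\
  (* (A1) *)
  `| f (Rt (x k) (eta k)) - f (x k) - ip G (eta k)
       - 2^-1 * ip (app Hf (eta k)) (eta k) | <= 2^-1 * LH * enorm (eta k) ^+ 3 /\
  (* (A2) *)
  opnorm (H k) <= KH /\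
  (* (A3)-b *)
  enorm (app (H k - Hf) (eta k)) <= deltaH * enorm (eta k) /\
  (* (A4), Cauchy point *)
  (exists aC : R, 0 <= aC /\
     (forall a : R, 0 <= a -> m (- (aC *: G)) <= m (- (a *: G))) /\
     m (eta k) <= m (- (aC *: G))) /\
  (* (A4), eigenpoint *)
  (lambda_min (H k) < 0 ->
     exists (u : 'rV[R]_d) (aE : R),
       ip u (app (H k) u) <= nu * lambda_min (H k) * enorm u ^+ 2 /\
       nu * lambda_min (H k) * enorm u ^+ 2 < 0 /\
       ip G u <= 0 /\ 0 <= aE /\
       (forall a : R, 0 <= a -> m (aE *: u) <= m (a *: u)) /\
       m (eta k) <= m (aE *: u)) /\
  deltaH <= Num.min
    (Num.min (12^-1) ((1 - rhoTH) / 6) * (Num.sqrt (KH ^+ 2 + 4 * sigma k * epsg) - KH))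
    (Num.min (6^-1) ((1 - rhoTH) / 3) * nu * epsH).

End RiemDefs.

(* Along a run that has not stopped, every iteration with sigma_k <= 2 gamma L_H decreases the
   cubic model by at least D = min(eps_g^2 / (2 (1 + K_H + 2 gamma L_H)),
   (nu eps_H)^3 / (6 (2 gamma L_H)^2)): through the Cauchy point when ||grad f(x_k)|| > eps_g, and
   through the eigenpoint when lambda_min(H_k) < -eps_H. The bound on delta_H makes the Hessian
   error cost at most a fraction 1 - rho_TH of that decrease once sigma_k >= 2 L_H, so such steps
   are accepted and sigma_k never exceeds 2 gamma L_H. An accepted step lowers f by rho_TH D and
   divides sigma by gamma, a rejected one multiplies sigma by gamma; counting with the potential
   f(x_k) - (rho_TH D / 2) log_gamma sigma_k bounds the number of iterations by
   2 (f(x_0) - min f) / (rho_TH D) + log_gamma (2 gamma L_H / sigma_0), and D is of order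
   min(eps_g^2, eps_H^3). *)

From HB Require Import structures.
From mathcomp Require Import all_boot all_order all_algebra.
From mathcomp Require Import all_classical all_reals all_analysis.
From mathcomp Require Import ring lra.
Set Implicit Arguments. Unset Strict Implicit. Unset Printing Implicit Defensive.
Import Order.TTheory GRing.Theory Num.Theory.
Import numFieldNormedType.Exports.
Local Open Scope ring_scope.

Section ScalarBounds.
Variable R : realFieldType.
Implicit Types a b c e h K p s t : R.

Lemma quad_sub_cubic_le s t e : 0 < s -> 0 <= t -> 0 <= e ->
  e / 2 * t ^+ 2 - s / 12 * t ^+ 3 <= 8 / 3 * e ^+ 3 / s ^+ 2.
Proof.
move=> s0 t0 e0; rewrite -subr_ge0.
have -> : 8 / 3 * e ^+ 3 / s ^+ 2 - (e / 2 * t ^+ 2 - s / 12 * t ^+ 3)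
    = (s * t - 4 * e) ^+ 2 * (s * t + 2 * e) / (12 * s ^+ 2).
  by field; rewrite gt_eqF.
apply: divr_ge0; last by have := sqr_ge0 s; lra.
apply: mulr_ge0; first exact: sqr_ge0.
have := mulr_ge0 (ltW s0) t0; lra.
Qed.

Lemma expr3_le_min_mul a b c h : 0 <= a -> 0 <= b -> 0 <= c -> 0 <= h ->
  c <= Num.min a b * h -> c ^+ 3 <= a ^+ 2 * b * h ^+ 3.
Proof.
move=> a0 b0 c0 h0 hc; set m := Num.min a b.
have m0 : 0 <= m by rewrite le_min a0.
have ma : m <= a by rewrite ge_min lexx.
have mb : m <= b by rewrite ge_min lexx orbT.
apply: (le_trans (lerXn2r 3 _ _ hc)); rewrite ?nnegrE ?mulr_ge0 // exprMn.
apply: ler_wpM2r; first exact: exprn_ge0.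
have -> : m ^+ 3 = m * m * m by rewrite !exprS expr0 mulr1 mulrA.
by apply: ler_pM; rewrite ?mulr_ge0 ?ler_pM.
Qed.

(* Both branches of the bound on delta_H produce the constant 1/108:
   (1/6)^2 (1/3) = (1/12)^2 (1/6) 2^3. *)
Lemma cubic_delta_le_decrease delta X s D rho : 0 < s -> 0 <= X -> rho <= 1 ->
  delta ^+ 3 <= (1 - rho) / 108 * X ^+ 3 -> X ^+ 3 / (6 * s ^+ 2) <= D ->
  8 / 3 * delta ^+ 3 / s ^+ 2 <= (1 - rho) * D.
Proof.
move=> s0 X0 rho1 hdelta.
have Y0 : 0 <= X ^+ 3 / s ^+ 2 by rewrite divr_ge0 ?exprn_ge0 // ltW.
have -> : X ^+ 3 / (6 * s ^+ 2) = 6^-1 * (X ^+ 3 / s ^+ 2) by field; rewrite gt_eqF.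
move=> hD.
have : 8 / 3 * delta ^+ 3 / s ^+ 2 <= 8 / 3 * ((1 - rho) / 108 * X ^+ 3) / s ^+ 2.
  apply: ler_wpM2r; first by rewrite invr_ge0 exprn_ge0 ?ltW.
  by apply: ler_wpM2l => //; lra.
have -> : 8 / 3 * ((1 - rho) / 108 * X ^+ 3) / s ^+ 2 = 2 / 81 * (1 - rho) * (X ^+ 3 / s ^+ 2).
  by field; rewrite gt_eqF.
nra.
Qed.

Definition ray_model_bound K s e p :=
  - p * e + 2^-1 * K * p ^+ 2 + 3^-1 * s * p ^+ 3.

Lemma ray_model_bound_short K s sm e : 0 < e < 1 -> 0 <= K -> 0 < s <= sm ->
  ray_model_bound K s e (e / (1 + K + sm)) <= - (e ^+ 2 / (2 * (1 + K + sm))).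
Proof.
move=> /andP[e0 e1] K0 /andP[s0 ssm].
set Z := 1 + K + sm; set p := e / Z.
have Z0 : 0 < Z by rewrite /Z; lra.
have p0 : 0 < p by rewrite divr_gt0.
have p1 : p <= 1 by rewrite ler_pdivrMr // mul1r /Z; lra.
have ep : e = p * Z by rewrite /p divfK ?gt_eqF.
rewrite -subr_ge0 /ray_model_bound ep.
have -> : - ((p * Z) ^+ 2 / (2 * Z)) - (- p * (p * Z) + 2^-1 * K * p ^+ 2 + 3^-1 * s * p ^+ 3)
    = p ^+ 2 * (1 + sm - 2 / 3 * s * p) / 2.
  by rewrite /Z; field; rewrite -/Z gt_eqF.
apply: divr_ge0 => //; apply: mulr_ge0; first exact: sqr_ge0.
nra.
Qed.

Lemma ray_model_bound_root K s e p : 0 <= K -> 0 < s -> s * p ^+ 2 + K * p = e ->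
  ray_model_bound K s e p <= - (2 / 3 * s * p ^+ 3).
Proof.
move=> K0 s0 <-; rewrite /ray_model_bound.
have : 0 <= K * p ^+ 2 by rewrite mulr_ge0 ?sqr_ge0.
lra.
Qed.

End ScalarBounds.

Section CauchyRoot.
Variable R : rcfType.
Implicit Types K s e : R.

Definition cauchy_root K s e := (Num.sqrt (K ^+ 2 + 4 * s * e) - K) / (2 * s).

Lemma cauchy_root_gt0 K s e : 0 <= K -> 0 < s -> 0 < e -> 0 < cauchy_root K s e.
Proof.
move=> K0 s0 e0; apply: divr_gt0; last by rewrite mulr_gt0.
rewrite subr_gt0 -{1}(ger0_norm K0) -sqrtr_sqr ltr_sqrt; last first.
  by rewrite ltr_wpDl ?sqr_ge0 ?mulr_gt0.
by rewrite ltrDl !mulr_gt0.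
Qed.

Lemma cauchy_rootE K s e : 0 < s -> 0 <= e ->
  s * cauchy_root K s e ^+ 2 + K * cauchy_root K s e = e.
Proof.
move=> s0 e0; rewrite /cauchy_root.
have /sqr_sqrtr sq : 0 <= K ^+ 2 + 4 * s * e.
  by rewrite addr_ge0 ?sqr_ge0 // !mulr_ge0 // ltW.
set r := Num.sqrt _ in sq *.
have -> : s * ((r - K) / (2 * s)) ^+ 2 + K * ((r - K) / (2 * s)) = (r ^+ 2 - K ^+ 2) / (4 * s).
  by field; rewrite gt_eqF.
by rewrite sq; field; rewrite gt_eqF.
Qed.

End CauchyRoot.

Section InnerProduct.
Variables (R : realType) (d : nat).
Implicit Types (u v w : 'rV[R]_d) (H : 'M[R]_d).

Lemma ipE u v : ip u v = \sum_i u 0 i * v 0 i.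
Proof. by rewrite /ip !mxE; apply: eq_bigr => i _; rewrite mxE. Qed.

Lemma ipC u v : ip u v = ip v u.
Proof. by rewrite !ipE; apply: eq_bigr => i _; rewrite mulrC. Qed.

Lemma ipZl a u v : ip (a *: u) v = a * ip u v.
Proof. by rewrite !ipE mulr_sumr; apply: eq_bigr => i _; rewrite mxE mulrA. Qed.

Lemma ipZr a u v : ip u (a *: v) = a * ip u v.
Proof. by rewrite ipC ipZl ipC. Qed.

Lemma ipBl u v w : ip (u - v) w = ip u w - ip v w.
Proof. by rewrite !ipE -sumrB; apply: eq_bigr => i _; rewrite !mxE mulrBl. Qed.

Lemma ipBr u v w : ip w (u - v) = ip w u - ip w v.
Proof. by rewrite ipC ipBl !(ipC w). Qed.

Lemma ip_ge0 u : 0 <= ip u u.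
Proof. by rewrite ipE; apply: sumr_ge0 => i _; rewrite -expr2 sqr_ge0. Qed.

Lemma enorm_ge0 u : 0 <= enorm u.
Proof. exact: sqrtr_ge0. Qed.

Lemma sqr_enorm u : enorm u ^+ 2 = ip u u.
Proof. exact/sqr_sqrtr/ip_ge0. Qed.

Lemma enormZ a u : enorm (a *: u) = `|a| * enorm u.
Proof. by rewrite /enorm ipZl ipZr mulrA -expr2 sqrtrM ?sqr_ge0 // sqrtr_sqr. Qed.

Lemma ip_sqr_le u v : ip u v ^+ 2 <= ip u u * ip v v.
Proof.
set A := ip u u; set B := ip u v; set C := ip v v.
have quad a b : 0 <= a ^+ 2 * A - 2 * a * b * B + b ^+ 2 * C.
  have := ip_ge0 (a *: u - b *: v).
  by rewrite !ipBl !ipBr !ipZl !ipZr (ipC v u) -/A -/B -/C; lra.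
have A0 : 0 <= A := ip_ge0 u; have C0 : 0 <= C := ip_ge0 v.
rewrite -subr_ge0.
have [Cpos|Cle0] := ltrP 0 C.
  by rewrite -(pmulr_rge0 _ Cpos); have := quad C B; nra.
have [Apos|Ale0] := ltrP 0 A.
  by rewrite -(pmulr_rge0 _ Apos); have := quad B A; nra.
have := quad 1 1; have := quad 1 (-1); nra.
Qed.

Lemma ip_cauchy_schwarz u v : `|ip u v| <= enorm u * enorm v.
Proof.
rewrite -sqrtr_sqr /enorm -sqrtrM ?ip_ge0 // ler_sqrt ?mulr_ge0 ?ip_ge0 //.
exact: ip_sqr_le.
Qed.

Lemma appZ H a u : app H (a *: u) = a *: app H u.
Proof. by rewrite /app scalemxAl. Qed.

Lemma appB H1 H2 u : app (H1 - H2) u = app H1 u - app H2 u.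
Proof. by rewrite /app mulmxBr. Qed.

Lemma coord_le_enorm u i : `|u 0 i| <= enorm u.
Proof.
rewrite -sqrtr_sqr ler_sqrt ?ip_ge0 // ipE (bigD1 i) //= -expr2 lerDl.
by apply: sumr_ge0 => j _; rewrite -expr2 sqr_ge0.
Qed.

Lemma ip_app_le_entries H u : enorm u <= 1 ->
  ip u (app H u) <= \sum_i \sum_j `|H j i|.
Proof.
move=> u1; have ui1 i : `|u 0 i| <= 1 := le_trans (coord_le_enorm u i) u1.
apply: (le_trans (ler_norm _)); rewrite ipE.
apply: (le_trans (ler_norm_sum _ _ _)); apply: ler_sum => i _.
rewrite normrM /app mxE -[leRHS]mul1r; apply: ler_pM => //.
apply: (le_trans (ler_norm_sum _ _ _)); apply: ler_sum => j _.
by rewrite normrM -[leRHS]mul1r ler_pM.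
Qed.

Lemma ip_app_le_opnorm H u : ip (app H u) u <= opnorm H * enorm u ^+ 2.
Proof.
have [u0|upos] := eqVneq (enorm u) 0.
  have := ip_cauchy_schwarz (app H u) u; rewrite u0 mulr0 expr0n /= mulr0.
  by rewrite normr_le0 => /eqP ->.
have t0 : 0 < enorm u by rewrite lt_def upos enorm_ge0.
set e := (enorm u)^-1 *: u.
have e1 : enorm e = 1 by rewrite enormZ ger0_norm ?invr_ge0 ?enorm_ge0 // mulVf.
have : ip e (app H e) <= opnorm H.
  apply: ub_le_sup; last by exists e => //=; rewrite e1.
  by exists (\sum_i \sum_j `|H j i|) => _ [e' e'1 <-]; exact: ip_app_le_entries.
rewrite /e appZ ipZl ipZr ipC mulrA -expr2 exprVn.
by rewrite ler_pdivrMl ?exprn_gt0 // mulrC.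
Qed.

End InnerProduct.

Section CubicModel.
Variables (R : realType) (d : nat).
Implicit Types (G u e : 'rV[R]_d) (H : 'M[R]_d).

Lemma model_ray_le G H s K eps p : opnorm H <= K -> 0 < eps <= enorm G ->
  0 < p -> 0 <= s ->
  model G H s (- (p / enorm G) *: G) <= ray_model_bound K s eps p.
Proof.
move=> HK /andP[eps0 epsG] p0 s0; set g := enorm G.
have g0 : 0 < g by apply: lt_le_trans epsG.
set a := p / g; have a0 : 0 < a by rewrite divr_gt0.
have ag : a * g = p by rewrite /a divfK ?gt_eqF.
have curv : a ^+ 2 * ip (app H G) G <= K * p ^+ 2.
  have -> : K * p ^+ 2 = a ^+ 2 * (K * g ^+ 2) by rewrite -ag; ring.
  rewrite ler_wpM2l ?sqr_ge0 //; apply: (le_trans (ip_app_le_opnorm H G)).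
  by rewrite ler_wpM2r ?sqr_ge0.
rewrite /model /ray_model_bound appZ ipZl !ipZr enormZ normrN ger0_norm ?(ltW a0) //.
rewrite -sqr_enorm -/g ag.
have : - p * g <= - p * eps by rewrite !mulNr lerN2 ler_pM2l.
have -> : - a * g ^+ 2 = - p * g by rewrite -ag; ring.
have -> : 2^-1 * (- a * (- a * ip (app H G) G)) = 2^-1 * (a ^+ 2 * ip (app H G) G) by ring.
lra.
Qed.

Lemma model_eigen_le G H u s h : 0 < h -> 0 < s -> 0 < enorm u ->
  ip u (app H u) <= - h * enorm u ^+ 2 -> ip G u <= 0 ->
  model G H s ((h / (s * enorm u)) *: u) <= - (h ^+ 3 / (6 * s ^+ 2)).
Proof.
move=> h0 s0 w0 curv descent; set w := enorm u in w0 curv *.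
set a := h / (s * w); have a0 : 0 < a by rewrite divr_gt0 ?mulr_gt0.
have aw : a * w = h / s by rewrite /a; field; rewrite !gt_eqF.
rewrite /model appZ ipZl !ipZr enormZ ger0_norm ?(ltW a0) // (ipC (app H u)) -/w.
have lin : a * ip G u <= 0 by rewrite pmulr_rle0.
have quad : a * (a * ip u (app H u)) <= - (h ^+ 3 / s ^+ 2).
  have -> : - (h ^+ 3 / s ^+ 2) = a ^+ 2 * (- h * w ^+ 2).
    transitivity (- h * (a * w) ^+ 2); last by ring.
    by rewrite aw; field; rewrite gt_eqF.
  by rewrite mulrA -expr2 ler_wpM2l ?sqr_ge0.
have -> : 3^-1 * s * (a * w) ^+ 3 = 3^-1 * (h ^+ 3 / s ^+ 2).
  by rewrite aw; field; rewrite gt_eqF.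
have -> : h ^+ 3 / (6 * s ^+ 2) = 6^-1 * (h ^+ 3 / s ^+ 2) by field; rewrite gt_eqF.
lra.
Qed.

Lemma decrease_ge_model (fx fy L s delta : R) G H Hf e :
  `|fy - fx - ip G e - 2^-1 * ip (app Hf e) e| <= 2^-1 * L * enorm e ^+ 3 ->
  enorm (app (H - Hf) e) <= delta * enorm e -> 0 < s -> 2 * L <= s -> 0 <= delta ->
  - model G H s e - 8 / 3 * delta ^+ 3 / s ^+ 2 <= fx - fy.
Proof.
move=> taylor hess s0 Ls delta0; set t := enorm e.
have t0 : 0 <= t := enorm_ge0 e.
have hessE : `|ip (app H e) e - ip (app Hf e) e| <= delta * t ^+ 2.
  rewrite -ipBl -appB; apply: (le_trans (ip_cauchy_schwarz _ _)).
  by rewrite expr2 mulrA ler_wpM2r.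
have cubic : L * t ^+ 3 <= s / 2 * t ^+ 3 by rewrite ler_wpM2r ?exprn_ge0 //; lra.
have := quad_sub_cubic_le (t := t) s0 t0 delta0.
move: taylor hessE; rewrite /model !ler_norml -/t.
lra.
Qed.

Lemma cauchy_step_decrease G H e s sm K eps delta rho :
  opnorm H <= K -> 0 <= K -> 0 < eps < 1 -> eps <= enorm G -> 0 < s <= sm ->
  rho <= 1 -> 0 <= delta ->
  (forall a, 0 <= a -> model G H s e <= model G H s (- (a *: G))) ->
  delta <= Num.min (12^-1) ((1 - rho) / 6) * (Num.sqrt (K ^+ 2 + 4 * s * eps) - K) ->
  eps ^+ 2 / (2 * (1 + K + sm)) <= - model G H s e /\
  8 / 3 * delta ^+ 3 / s ^+ 2 <= (1 - rho) * - model G H s e.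
Proof.
move=> HK K0 eps01 epsG s_sm rho1 delta0 best hdelta.
have [[eps0 eps1] [s0 ssm]] := (andP eps01, andP s_sm).
have along p : 0 < p -> model G H s e <= ray_model_bound K s eps p.
  move=> p0; apply: (le_trans (best _ (ltW (divr_gt0 p0 (lt_le_trans eps0 epsG))))).
  rewrite -scaleNr; apply: model_ray_le => //; [by rewrite eps0 | exact: ltW].
split.
  have p0 : 0 < eps / (1 + K + sm) by rewrite divr_gt0 //; lra.
  by have := along _ p0; have := ray_model_bound_short eps01 K0 s_sm; lra.
set r := cauchy_root K s eps.
have r0 : 0 < r by rewrite cauchy_root_gt0.
have rE : s * r ^+ 2 + K * r = eps by rewrite cauchy_rootE // ltW.
apply: (@cubic_delta_le_decrease _ delta (s * r) s _ rho s0 _ rho1).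
- by rewrite mulr_ge0 ?ltW.
- have sr : Num.sqrt (K ^+ 2 + 4 * s * eps) - K = 2 * s * r.
    by rewrite /r /cauchy_root; field; rewrite gt_eqF.
  rewrite sr in hdelta.
  have -> : (1 - rho) / 108 * (s * r) ^+ 3 = 12^-1 ^+ 2 * ((1 - rho) / 6) * (2 * s * r) ^+ 3.
    by field.
  have sr0 : 0 <= 2 * s * r by apply: mulr_ge0; [rewrite mulr_ge0 // ltW | exact: ltW].
  by apply: expr3_le_min_mul hdelta => //; lra.
- have := along _ r0; have := ray_model_bound_root K0 s0 rE.
  have -> : (s * r) ^+ 3 / (6 * s ^+ 2) = 6^-1 * (s * r ^+ 3) by field; rewrite gt_eqF.
  have : 0 <= s * r ^+ 3 by rewrite mulr_ge0 ?exprn_ge0 ?ltW.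
  lra.
Qed.

Lemma eigen_step_decrease G H u e s sm h delta rho :
  0 < h -> 0 < s <= sm -> 0 < enorm u -> rho <= 1 -> 0 <= delta ->
  ip u (app H u) <= - h * enorm u ^+ 2 -> ip G u <= 0 ->
  (forall a, 0 <= a -> model G H s e <= model G H s (a *: u)) ->
  delta <= Num.min (6^-1) ((1 - rho) / 3) * h ->
  h ^+ 3 / (6 * sm ^+ 2) <= - model G H s e /\
  8 / 3 * delta ^+ 3 / s ^+ 2 <= (1 - rho) * - model G H s e.
Proof.
move=> h0 /andP[s0 ssm] u0 rho1 delta0 curv descent best hdelta.
have dec : h ^+ 3 / (6 * s ^+ 2) <= - model G H s e.
  have := best _ (ltW (divr_gt0 h0 (mulr_gt0 s0 u0))).
  have := model_eigen_le (G := G) h0 s0 u0 curv descent; lra.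
split.
  have sm0 : 0 < sm := lt_le_trans s0 ssm.
  apply: le_trans dec; apply: ler_wpM2l; first by rewrite exprn_ge0 ?ltW.
  rewrite lef_pV2 ?posrE ?mulr_gt0 ?exprn_gt0 // ler_pM2l //.
  nra.
apply: (@cubic_delta_le_decrease _ delta h s _ rho s0 (ltW h0) rho1 _ dec).
have -> : (1 - rho) / 108 * h ^+ 3 = 6^-1 ^+ 2 * ((1 - rho) / 3) * h ^+ 3 by field.
by apply: expr3_le_min_mul hdelta => //; lra.
Qed.

End CubicModel.

Section Counting.
Variable R : realFieldType.
Implicit Types a b c u v : R.

Lemma nsteps_le_potential (phi ell : nat -> R) a N :
  (forall k, (k < N)%N ->
     (2 * a <= phi k - phi k.+1 /\ ell k.+1 = ell k - 1) \/
     (phi k.+1 = phi k /\ ell k.+1 = ell k + 1)) ->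
  N%:R * a <= phi 0%N - phi N + a * (ell N - ell 0%N).
Proof.
elim: N => [|N IH] step; first by rewrite mul0r !subrr mulr0 addr0.
have := IH (fun k ltkN => step k (ltnW ltkN)).
rewrite -natr1 mulrDl mul1r.
by case: (step N (ltnSn N)) => [[dec ->] | [-> ->]]; lra.
Qed.

Lemma min_mul_max_ge a b u v : 0 <= a -> 0 <= b -> 0 < u -> 0 < v ->
  Num.min a b <= Num.min (a * u) (b * v) * Num.max u^-1 v^-1.
Proof.
move=> a0 b0 u0 v0; set mx := Num.max u^-1 v^-1.
have scaled c w : 0 <= c -> 0 < w -> w^-1 <= mx -> c <= c * w * mx.
  move=> c0 w0 wmx; apply: le_trans (ler_wpM2l (mulr_ge0 c0 (ltW w0)) wmx).
  by rewrite mulfK ?gt_eqF.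
have mx0 : 0 <= mx by rewrite le_max invr_ge0 ltW.
rewrite minr_pMl // le_min; apply/andP; split.
  by apply: le_trans (scaled a u a0 u0 _); rewrite ?ge_min ?le_max lexx.
by apply: le_trans (scaled b v b0 v0 _); rewrite ?ge_min ?le_max lexx orbT.
Qed.

Lemma bound_scale_le F L c D Mx C : 0 <= F -> 0 <= L -> 0 < c ->
  c <= D * Mx -> 1 <= Mx -> F / c + L <= C -> F / D + L <= C * Mx.
Proof.
move=> F0 L0 c0 cDM Mx1 FLC; have Mx0 : 0 < Mx by apply: lt_le_trans Mx1.
have D0 : 0 < D by rewrite -(pmulr_lgt0 _ Mx0); apply: lt_le_trans cDM.
apply: le_trans (ler_wpM2r (ltW Mx0) FLC); rewrite mulrDl.
apply: lerD; last by rewrite ler_peMr.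
by rewrite -mulrA ler_wpM2l // mulrC ler_pdivlMr // mulrC ler_pdivrMr // mulrC.
Qed.

End Counting.

Section Algorithm.
Variables (R : realType) (d : nat) (M : Type) (Rt : M -> 'rV[R]_d -> M) (f : M -> R).
Variables (rhoTH gamma nu epsg epsH LH KH deltaH : R).
Variables (x : nat -> M) (sigma : nat -> R) (H : nat -> 'M[R]_d) (eta : nat -> 'rV[R]_d).
Hypotheses (rho01 : 0 < rhoTH < 1) (gamma_gt1 : 1 < gamma) (nu_gt0 : 0 < nu).
Hypotheses (LH_gt0 : 0 < LH) (KH_gt0 : 0 < KH).
Hypotheses (epsg01 : 0 < epsg < 1) (epsH_gt0 : 0 < epsH) (deltaH_gt0 : 0 < deltaH).

Local Notation G k := (rgrad Rt f (x k)).
Local Notation m k := (model (G k) (H k) (sigma k)).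
Local Notation stops k := (stop_test epsg epsH (G k) (H k)).
Local Notation valid k := (step_ok Rt f rhoTH gamma nu epsg epsH LH KH deltaH x sigma H eta k).

Definition sigma_max := 2 * gamma * LH.

Definition decrease_floor := Num.min (epsg ^+ 2 / (2 * (1 + KH + sigma_max)))
  ((nu * epsH) ^+ 3 / (6 * sigma_max ^+ 2)).

Lemma sigma_max_gt0 : 0 < sigma_max.
Proof. by rewrite /sigma_max !mulr_gt0 // (lt_trans ltr01 gamma_gt1). Qed.

Lemma decrease_floor_gt0 : 0 < decrease_floor.
Proof.
have [eg0 _] := andP epsg01; have sm0 := sigma_max_gt0.
rewrite /decrease_floor lt_min; apply/andP; split; apply: divr_gt0.
- exact: exprn_gt0.
- by rewrite mulr_gt0 // !addr_gt0.
- exact/exprn_gt0/mulr_gt0.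
- by rewrite mulr_gt0 // exprn_gt0.
Qed.

Definition floor_coef :=
  Num.min ((2 * (1 + KH + sigma_max))^-1) (nu ^+ 3 / (6 * sigma_max ^+ 2)).

Lemma floor_coef_gt0 : 0 < floor_coef.
Proof.
have sm0 := sigma_max_gt0.
rewrite /floor_coef lt_min invr_gt0 mulr_gt0 // ?addr_gt0 //=.
by rewrite divr_gt0 ?exprn_gt0 // mulr_gt0 // exprn_gt0.
Qed.

Lemma floor_coef_le : floor_coef <= decrease_floor * Num.max (epsg ^- 2) (epsH ^- 3).
Proof.
have [eg0 _] := andP epsg01; have sm0 := sigma_max_gt0.
have -> : decrease_floor = Num.min ((2 * (1 + KH + sigma_max))^-1 * epsg ^+ 2)
    (nu ^+ 3 / (6 * sigma_max ^+ 2) * epsH ^+ 3).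
  by rewrite /decrease_floor; congr Num.min; ring.
apply: min_mul_max_ge; rewrite ?exprn_gt0 //.
  by rewrite invr_ge0 ltW // mulr_gt0 // !addr_gt0.
apply: divr_ge0; first exact/exprn_ge0/ltW.
by rewrite mulr_ge0 // exprn_ge0 // ltW.
Qed.

Lemma one_le_max_eps : 1 <= Num.max (epsg ^- 2) (epsH ^- 3).
Proof.
have [eg0 eg1] := andP epsg01.
by rewrite le_max invf_ge1 ?exprn_gt0 // exprn_ile1 // ltW.
Qed.

Lemma step_model_decrease k : 0 < sigma k <= sigma_max -> ~ stops k -> valid k ->
  decrease_floor <= - m k (eta k) /\
  8 / 3 * deltaH ^+ 3 / sigma k ^+ 2 <= (1 - rhoTH) * - m k (eta k).
Proof.
move=> sk nstop; rewrite /step_ok; cbv zeta.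
case=> _ [_ [_ [_ [opH [_ [cauchy [eigen]]]]]]].
rewrite le_min => /andP[hd1 hd2].
have [_ rho1] := andP rho01; have delta0 := ltW deltaH_gt0.
have [gsmall|glarge] := lerP (enorm (G k)) epsg.
  have lam : lambda_min (H k) < - epsH.
    by rewrite ltNge; apply/negP => hl; exact: nstop.
  have [|u [aE [hu1 [hu2 [hu3 [_ [aEmin le]]]]]]] := eigen; first by have := epsH_gt0; lra.
  have u0 : 0 < enorm u.
    rewrite lt_def enorm_ge0 andbT; apply: contraTneq hu2 => ->.
    by rewrite expr0n /= mulr0 ltxx.
  have curv : ip u (app (H k) u) <= - (nu * epsH) * enorm u ^+ 2.
    by apply: le_trans hu1 _; rewrite ler_wpM2r ?sqr_ge0 // -mulrN ler_pM2l // ltW.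
  have best a : 0 <= a -> m k (eta k) <= m k (a *: u).
    by move=> a0; apply: le_trans le (aEmin a a0).
  rewrite -mulrA in hd2.
  have [dec cub] := eigen_step_decrease (mulr_gt0 nu_gt0 epsH_gt0) sk u0 (ltW rho1)
    delta0 curv hu3 best hd2.
  by split=> //; apply: le_trans dec; rewrite /decrease_floor ge_min lexx orbT.
have [aC [_ [aCmin le]]] := cauchy.
have best a : 0 <= a -> m k (eta k) <= m k (- (a *: G k)).
  by move=> a0; apply: le_trans le (aCmin a a0).
have [dec cub] := cauchy_step_decrease opH (ltW KH_gt0) epsg01 (ltW glarge) sk
  (ltW rho1) delta0 best hd1.
by split=> //; apply: le_trans dec; rewrite /decrease_floor ge_min lexx.
Qed.

Lemma step_very_successful k : 0 < sigma k <= sigma_max -> 2 * LH <= sigma k ->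
  ~ stops k -> valid k ->
  rhoTH * - m k (eta k) <= f (x k) - f (Rt (x k) (eta k)).
Proof.
move=> sk LHs nstop vk; have [_ cub] := step_model_decrease sk nstop vk.
move: vk; rewrite /step_ok; cbv zeta => -[_ [_ [_ [taylor [_ [hess _]]]]]].
have [s0 _] := andP sk.
have := decrease_ge_model taylor hess s0 LHs (ltW deltaH_gt0).
lra.
Qed.

Lemma step_update k : 0 < sigma k <= sigma_max -> ~ stops k -> valid k ->
  0 < sigma k.+1 <= sigma_max /\
  ((rhoTH * decrease_floor <= f (x k) - f (x k.+1) /\ sigma k.+1 = sigma k / gamma) \/
   (x k.+1 = x k /\ sigma k.+1 = gamma * sigma k)).
Proof.
move=> sk nstop vk; have [s0 ssm] := andP sk; have g0 : 0 < gamma := lt_trans ltr01 gamma_gt1.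
have [dec _] := step_model_decrease sk nstop vk.
have very LHs := step_very_successful sk LHs nstop vk.
move: vk; rewrite /step_ok; cbv zeta => -[_ [success [failure _]]].
have mpos : 0 < - m k (eta k) := lt_le_trans decrease_floor_gt0 dec.
have [rho0 _] := andP rho01.
case: (lerP rhoTH ((f (x k) - f (Rt (x k) (eta k))) / - m k (eta k))) => ratio.
  have [-> ->] := success ratio.
  split; last (left; split=> //).
    rewrite divr_gt0 //= ler_pdivrMr //; apply: le_trans ssm _.
    exact: ler_peMr (ltW sigma_max_gt0) (ltW gamma_gt1).
  move: ratio; rewrite ler_pdivlMr // => ratio.
  by apply: le_trans ratio; rewrite ler_pM2l.
have [-> ->] := failure ratio; split; last by right.
have small : sigma k < 2 * LH.
  by rewrite ltNge; apply/negP => /very; rewrite -ler_pdivlMr // leNgt ratio.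
by rewrite mulr_gt0 //= /sigma_max [2 * gamma]mulrC -mulrA ler_pM2l // ltW.
Qed.

Variable xs : M.
Hypotheses (f_min : forall y, f xs <= f y) (sigma0 : 0 < sigma 0%N <= sigma_max).
Hypothesis valid_steps : forall k, (forall j, (j <= k)%N -> ~ stops j) -> valid k.

Lemma sigma_bounded k : (forall j, (j < k)%N -> ~ stops j) -> 0 < sigma k <= sigma_max.
Proof.
elim: k => [|k IH] nst //.
have sk := IH (fun j ltjk => nst j (ltnW ltjk)).
by have [] := step_update sk (nst k (ltnSn k)) (valid_steps nst).
Qed.

Definition iteration_bound := 2 * (f (x 0%N) - f xs) / rhoTH / decrease_floor
  + ln (sigma_max / sigma 0%N) / ln gamma.

Lemma iterations_before_stop N : (forall j, (j <= N)%N -> ~ stops j) ->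
  N.+1%:R <= iteration_bound.
Proof.
move=> nst; have [rho0 _] := andP rho01; have [s00 _] := andP sigma0.
have lng : 0 < ln gamma := ln_gt0 gamma_gt1.
have D0 := decrease_floor_gt0.
set a := rhoTH * decrease_floor / 2.
have a0 : 0 < a by rewrite divr_gt0 ?mulr_gt0.
pose ell k := ln (sigma k) / ln gamma.
have steps k : (k < N.+1)%N ->
    (2 * a <= f (x k) - f (x k.+1) /\ ell k.+1 = ell k - 1) \/
    (f (x k.+1) = f (x k) /\ ell k.+1 = ell k + 1).
  move=> kN; have nstk j : (j <= k)%N -> ~ stops j by move=> jk; apply/nst/(leq_trans jk).
  have sk := sigma_bounded (fun j jk => nstk j (ltnW jk)).
  have [s0 _] := andP sk.
  have g0 : 0 < gamma := lt_trans ltr01 gamma_gt1.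
  have [_ [[dec sE] | [xE sE]]] := step_update sk (nstk k (leqnn k)) (valid_steps nstk).
    left; split; first by rewrite /a; lra.
    by rewrite /ell sE ln_div ?posrE //; field; rewrite gt_eqF.
  by right; rewrite xE /ell sE lnM ?posrE //; split=> //; field; rewrite gt_eqF.
have := nsteps_le_potential steps.
have [sN0 sNmax] := andP (sigma_bounded (k := N.+1) nst).
have ellN : ell N.+1 - ell 0%N <= ln (sigma_max / sigma 0%N) / ln gamma.
  rewrite /ell -mulrBl ler_pM2r ?invr_gt0 // ln_div ?posrE ?sigma_max_gt0 //.
  by rewrite lerB ?ler_ln ?posrE ?sigma_max_gt0.
move=> count; have fN := f_min (x N.+1); have aell := ler_wpM2l (ltW a0) ellN.
rewrite /iteration_bound.
have -> : 2 * (f (x 0%N) - f xs) / rhoTH / decrease_floor = (f (x 0%N) - f xs) / a.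
  by rewrite /a; field; rewrite !gt_eqF.
rewrite -(ler_pM2r a0) mulrDl divfK ?gt_eqF //; lra.
Qed.

Lemma iteration_bound_ge0 : 0 <= iteration_bound.
Proof.
have [rho0 _] := andP rho01; have [s00 s0max] := andP sigma0.
have F0 : 0 <= f (x 0%N) - f xs by rewrite subr_ge0.
have L0 : 0 <= ln (sigma_max / sigma 0%N) by rewrite ln_ge0 // ler_pdivlMr // mul1r.
have D0 := ltW decrease_floor_gt0; have lng := ltW (ln_gt0 gamma_gt1).
by rewrite /iteration_bound addr_ge0 ?divr_ge0 ?mulr_ge0 // ltW.
Qed.

Lemma stops_within : exists k, k%:R <= iteration_bound /\ stops k.
Proof.
have /andP[leB ltB] := truncn_itv iteration_bound_ge0.
have [[k [kN sk]] | none] :=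
  pselect (exists k, (k <= Num.truncn iteration_bound)%N /\ stops k).
  by exists k; split=> //; apply: le_trans leB; rewrite ler_nat.
exfalso; suff: (Num.truncn iteration_bound).+1%:R <= iteration_bound.
  by rewrite leNgt ltB.
by apply: iterations_before_stop => j jN sj; apply: none; exists j.
Qed.

End Algorithm.

Theorem corollary3p11 (R : realType) (d : nat) (M : Type)
  (Rt : M -> 'rV[R]_d -> M) (n : nat) (fi : 'I_n -> M -> R)
  (x0 : M) (sigma0 gamma rhoTH nu LH KH : R) :
  (0 < n)%N ->
  (forall y : M, Rt y 0 = y) ->
  (forall (i : 'I_n) (y : M), C2 (fi i \o Rt y)) ->
  0 < rhoTH < 1 -> 1 < gamma -> 0 < nu < 1 -> 0 < sigma0 ->
  0 < LH -> 0 < KH ->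
  sigma0 <= 2 * gamma * LH ->
  (exists xs : M, forall y : M, favg fi xs <= favg fi y) ->
  exists C : R, 0 < C /\
    forall (epsg epsH deltaH : R) (x : nat -> M) (sigma : nat -> R)
           (H : nat -> 'M[R]_d) (eta : nat -> 'rV[R]_d),
      0 < epsg < 1 -> 0 < epsH < 1 -> 0 < deltaH < 1 ->
      x 0%N = x0 -> sigma 0%N = sigma0 ->
      (forall k : nat,
         (forall j : nat, (j <= k)%N ->
            ~ stop_test epsg epsH (rgrad Rt (favg fi) (x j)) (H j)) ->
         step_ok Rt (favg fi) rhoTH gamma nu epsg epsH LH KH deltaH
                 x sigma H eta k) ->
      exists k : nat,
        k%:R <= C * Num.max (epsg ^- 2) (epsH ^- 3) /\
        stop_test epsg epsH (rgrad Rt (favg fi) (x k)) (H k).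
Proof.
move=> _ _ _ rho01 gamma1 /andP[nu0 _] s00 LH0 KH0 s0max [xs f_min].
have [rho0 _] := andP rho01.
set F := 2 * (favg fi x0 - favg fi xs) / rhoTH.
set L := ln (sigma_max gamma LH / sigma0) / ln gamma.
have F0 : 0 <= F by rewrite divr_ge0 ?mulr_ge0 ?subr_ge0 // ltW.
have L0 : 0 <= L.
  apply: divr_ge0; last exact/ltW/ln_gt0.
  by rewrite ln_ge0 // ler_pdivlMr // mul1r.
have c0 := floor_coef_gt0 gamma1 nu0 LH0 KH0.
exists (F / floor_coef gamma nu LH KH + L + 1); split.
  by rewrite ltr_wpDl // addr_ge0 // divr_ge0 // ltW.
move=> epsg epsH deltaH x sigma H eta epsg01 /andP[epsH0 _] /andP[delta0 _] x0E s0E valid.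
have s0 : 0 < sigma 0%N <= sigma_max gamma LH by rewrite s0E s00.
have [k [kB stop_k]] :=
  stops_within rho01 gamma1 nu0 LH0 KH0 epsg01 epsH0 delta0 f_min s0 valid.
exists k; split=> //; apply: le_trans kB _.
rewrite /iteration_bound x0E s0E -/F -/L.
apply: bound_scale_le F0 L0 c0 (floor_coef_le gamma1 nu0 LH0 KH0 epsg01 epsH0)
  (one_le_max_eps _ epsg01) _.
lra.
Qed.
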